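(* Let $\Gamma_H$ be the H-junction tree with edges $e_1,\dots,e_5$ of propagation times $t_1,\dots,t_5$, linearly independent over $\mathbb{Q}$, where the two interior vertices are $A$ (incident to $e_1,e_2,e_3$) and $B$ (incident to $e_3,e_4,e_5$). Then there is a constant $C$ independent of $T$ such that for all $T\ge 0$ $$N(\Gamma_H, A, A, T) = \#[2n_1t_1 + 2n_3t_3 + 2n_4t_4 + 2n_5t_5 \le T] + \#[2n_2t_2 + 2n_3t_3 + 2n_4t_4 + 2n_5t_5 \le T] - \#[2n_1t_1 + 2n_4t_4 + 2n_5t_5 \le T] - \#[2n_2t_2 + 2n_4t_4 + 2n_5t_5 \le T] + \#[2n_1t_1 + 2n_2t_2 \le T] + \#[2n_1t_1 \le T] + \#[2n_2t_2 \le T] + C.$$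
   Context: $\Gamma_H$ has six vertices: $A$, $B$, and the four distinct valence-one endpoints of $e_1,e_2,e_4,e_5$ other than $A$, $B$; $e_3$ joins $A$ and $B$. Dynamics: each edge $e_i$ is traversed in time $t_i$; at time $0$ the process starts at $A$ (a point departs from $A$ along each incident edge); at a valence-one vertex a point is reflected; if $k$ points arrive simultaneously at an interior vertex of valence $v$, then $v$ points leave it, one along each incident edge, and $v-k$ new points are said to be born there. $N(\Gamma,A,X,T)$ is the total number of new points born at vertex $X$ up to the moment $T$ when the process starts at $A$. $\#[\text{inequality}]$ denotes the number of tuples of nonnegative integers $n_i$ satisfying the inequality. *)

From Stdlib Require Import Reals QArith Qreals List ClassicalEpsilon.
Import ListNotations.
Open Scope R_scope.

Definition count_is {X : Type} (P : X -> Prop) (n : nat) : Prop :=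
  exists l : list X, NoDup l /\ (forall x, In x l <-> P x) /\ length l = n.

(* The number of elements of P (P finite); 0 by convention if P is infinite
   (never used in that case: all sets counted below are finite). *)
Definition ncard {X : Type} (P : X -> Prop) : nat :=
  match excluded_middle_informative (exists n, count_is P n) with
  | left H => proj1_sig (constructive_indefinite_description _ H)
  | right _ => 0%nat
  end.

Fixpoint wsum (c : list R) (n : list nat) : R :=
  match c, n with
  | ci :: c', ni :: n' => ci * INR ni + wsum c' n'
  | _, _ => 0
  end.

(* #[ c_1 n_1 + ... + c_k n_k <= T ] : number of tuples (n_1,...,n_k) of
   nonnegative integers satisfying the inequality. *)
Definition lattice_count (c : list R) (T : R) : nat :=
  ncard (fun n : list nat => length n = length c /\ wsum c n <= T).

(* A, B interior; L1, L2, L4, L5 the valence-one endpoints of e1, e2, e4, e5. *)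
Inductive vertex := vA | vB | vL1 | vL2 | vL4 | vL5.
Inductive edge := e1 | e2 | e3 | e4 | e5.

Definition ends (e : edge) : vertex * vertex :=
  match e with
  | e1 => (vA, vL1)
  | e2 => (vA, vL2)
  | e3 => (vA, vB)
  | e4 => (vB, vL4)
  | e5 => (vB, vL5)
  end.

Definition link (e : edge) (X Y : vertex) : Prop :=
  ends e = (X, Y) \/ ends e = (Y, X).

Definition incident (e : edge) (X : vertex) : Prop := exists Y, link e X Y.

Definition tH (t1 t2 t3 t4 t5 : R) (e : edge) : R :=
  match e with e1 => t1 | e2 => t2 | e3 => t3 | e4 => t4 | e5 => t5 end.

(* [departs t X0 X s]: at time s points leave vertex X, one along each
   incident edge (process started at X0 at time 0).  A point leaving X along e
   at time s arrives at the other end Y at time s + t e; any arrival at Y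
   (at an interior vertex, or a reflection at a leaf) makes points leave Y
   along every edge incident to Y at that moment. *)
Inductive departs (t : edge -> R) (X0 : vertex) : vertex -> R -> Prop :=
| dep_start : departs t X0 X0 0
| dep_step : forall e X Y s,
    link e X Y -> departs t X0 X s -> departs t X0 Y (s + t e).

Definition arrives (t : edge -> R) (X0 : vertex) (e : edge) (Y : vertex) (tau : R) : Prop :=
  exists X, link e X Y /\ departs t X0 X (tau - t e).

(* Newborn points at X: when k points arrive simultaneously at X (valence v),
   v points leave and v - k are born; we index the born points by
   (time, incident edge without an arriving point). *)
Definition birth (t : edge -> R) (X0 X : vertex) (T : R) (p : R * edge) : Prop :=
  fst p <= T /\ departs t X0 X (fst p) /\ incident (snd p) X /\
  ~ arrives t X0 (snd p) X (fst p).

Definition N_H (t : edge -> R) (X0 X : vertex) (T : R) : nat :=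
  ncard (birth t X0 X T).

Definition Q_lin_indep5 (t1 t2 t3 t4 t5 : R) : Prop :=
  forall q1 q2 q3 q4 q5 : Q,
    Q2R q1 * t1 + Q2R q2 * t2 + Q2R q3 * t3 + Q2R q4 * t4 + Q2R q5 * t5 = 0 ->
    q1 == 0 /\ q2 == 0 /\ q3 == 0 /\ q4 == 0 /\ q5 == 0.

(* A point leaving A at time s has followed a walk from A back to A.  Such a walk
   crosses every edge an even number of times, so s = 2 (k1 t1 + ... + k5 t5)
   where k_e counts round trips over e, and k4, k5 can be nonzero only if k3 is;
   conversely every such k is realised by bouncing back and forth.  A point is
   born at A along an edge e incident to A exactly when no point arrives along e,
   and since the t_e are Q-independent the time determines k, so this happens iff
   k_e = 0.  Hence births along e1 are the lattice points (k2, k3, k4, k5) with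
   k3 = 0 => k4 = k5 = 0, of which there are #[2345] - #[245] + #[2]; births along
   e2 are counted symmetrically, and births along e3 are the points (k1, k2).
   Summing gives the formula with C = 0. *)

From Stdlib Require Import Reals QArith Qreals List ZArith.
From Stdlib Require Import Lia Lra Classical ClassicalEpsilon.
Import ListNotations.
Open Scope R_scope.

Lemma count_is_unique {X : Type} (P : X -> Prop) n m :
  count_is P n -> count_is P m -> n = m.
Proof.
  intros [l1 [N1 [M1 <-]]] [l2 [N2 [M2 <-]]].
  apply Nat.le_antisymm; apply NoDup_incl_length; auto;
    intros x Hx; [apply M2, M1 | apply M1, M2]; exact Hx.
Qed.

Lemma ncard_spec {X : Type} (P : X -> Prop) n : count_is P n -> ncard P = n.
Proof.
  intro H. unfold ncard. destruct excluded_middle_informative as [H'|H'].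
  - destruct (constructive_indefinite_description _ H') as [k Hk]; simpl.
    exact (count_is_unique P k n Hk H).
  - exfalso; eauto.
Qed.

Lemma count_is_ext {X : Type} (P Q : X -> Prop) n :
  (forall x, P x <-> Q x) -> count_is P n -> count_is Q n.
Proof.
  intros E [l [N [M L]]]. exists l; repeat split; auto; intro Hx.
  - apply E, M, Hx.
  - apply M, E, Hx.
Qed.

Lemma count_is_union {X : Type} (P Q : X -> Prop) a b :
  count_is P a -> count_is Q b -> (forall x, P x -> Q x -> False) ->
  count_is (fun x => P x \/ Q x) (a + b).
Proof.
  intros [l1 [N1 [M1 <-]]] [l2 [N2 [M2 <-]]] D.
  exists (l1 ++ l2); repeat split.
  - apply NoDup_app; auto. intros x H1 H2. apply (D x); [apply M1|apply M2]; auto.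
  - rewrite in_app_iff, M1, M2; tauto.
  - rewrite in_app_iff, M1, M2; tauto.
  - apply length_app.
Qed.

Lemma count_is_image {X Y : Type} (P : X -> Prop) (f : X -> Y) n :
  count_is P n -> (forall x x', P x -> P x' -> f x = f x' -> x = x') ->
  count_is (fun y => exists x, P x /\ y = f x) n.
Proof.
  intros [l [N [M <-]]] I. exists (map f l); repeat split.
  - assert (Hl : forall x, In x l -> P x) by (intros x Hx; apply M, Hx). clear M.
    induction l as [|a l IH]; simpl; constructor; inversion N as [|? ? Na Nl]; subst.
    + rewrite in_map_iff. intros [x [E Hx]].
      rewrite (I x a) in Hx; simpl in Hl; auto.
    + simpl in Hl; auto.
  - rewrite in_map_iff. intros [z [<- Hz]]. exists z; split; [apply M|]; auto.
  - intros [z [Hz ->]]. apply in_map, M, Hz.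
  - apply length_map.
Qed.

Lemma count_is_bij {X Y : Type} (P : X -> Prop) (Q : Y -> Prop) (f : X -> Y) n :
  count_is P n -> (forall x x', P x -> P x' -> f x = f x' -> x = x') ->
  (forall y, Q y <-> exists x, P x /\ y = f x) -> count_is Q n.
Proof.
  intros HP I E. apply (count_is_ext (fun y => exists x, P x /\ y = f x)).
  - intro y; symmetry; apply E.
  - apply count_is_image; auto.
Qed.

Lemma count_is_incl_list {X : Type} (l : list X) (P : X -> Prop) :
  (forall x, P x -> In x l) -> exists n, count_is P n.
Proof.
  revert P; induction l as [|a l IH]; intros P H.
  - exists 0%nat, []; repeat split; [constructor | contradiction | intros Hx; apply (H _ Hx)].
  - destruct (IH (fun x => P x /\ x <> a)) as [n [k [N [M L]]]].
    { intros x [Hx Hne]. destruct (H x Hx); [congruence | auto]. }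
    destruct (classic (P a)) as [Pa|Pa].
    + exists (S n), (a :: k); repeat split.
      * constructor; auto. intro Hin; apply M in Hin; tauto.
      * intros [<-|Hx]; [auto | apply M in Hx; tauto].
      * intro Hx. destruct (classic (a = x)) as [|Hne]; [left; auto | right; apply M; auto].
      * simpl; congruence.
    + exists n, k; repeat split; auto.
      * intro Hx; apply M in Hx; tauto.
      * intro Hx; apply M; split; congruence.
Qed.

Lemma count_is_subset {X : Type} (P Q : X -> Prop) n :
  count_is P n -> (forall x, Q x -> P x) -> exists m, count_is Q m.
Proof.
  intros [l [_ [M _]]] H. apply (count_is_incl_list l). intros x Hx; apply M, H, Hx.
Qed.

Definition lattice_pts (c : list R) (T : R) (n : list nat) : Prop :=
  length n = length c /\ wsum c n <= T.

Lemma wsum_nonneg c n : Forall (fun a => 0 < a) c -> 0 <= wsum c n.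
Proof.
  revert n; induction c as [|a c IH]; intros [|i n] Hc; simpl; try lra.
  inversion Hc; subst. specialize (IH n ltac:(assumption)).
  pose proof (pos_INR i). nra.
Qed.

Lemma lattice_pts_finite c T :
  Forall (fun a => 0 < a) c -> exists k, count_is (lattice_pts c T) k.
Proof.
  induction c as [|a c IH]; intro Hc.
  - apply (count_is_incl_list [[]]). intros [|i n] [Hl _]; [left; auto | discriminate].
  - inversion Hc as [|? ? Ha Hc']; subst. destruct (IH Hc') as [k [l [_ [M _]]]].
    destruct (INR_archimed a T Ha) as [B HB].
    apply (count_is_incl_list (flat_map (fun i => map (cons i) l) (seq 0 B))).
    intros [|i n] [Hl Hw]; [discriminate|]. simpl in Hl, Hw.
    pose proof (wsum_nonneg c n Hc'). pose proof (pos_INR i).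
    apply in_flat_map. exists i; split.
    + apply in_seq. split; [lia|]. simpl.
      destruct (Nat.lt_ge_cases i B) as [Hi|Hi]; auto.
      apply le_INR in Hi. nra.
    + apply in_map, M. split; [lia | nra].
Qed.

Lemma lattice_count_spec c T : Forall (fun a => 0 < a) c ->
  count_is (lattice_pts c T) (lattice_count c T).
Proof.
  intro Hc. destruct (lattice_pts_finite c T Hc) as [k Hk].
  change (count_is (lattice_pts c T) (ncard (lattice_pts c T))).
  rewrite (ncard_spec _ _ Hk). exact Hk.
Qed.

Definition insert_zero (n : list nat) : list nat :=
  match n with a :: r => a :: 0%nat :: r | [] => [] end.

Lemma nth_insert_zero n : nth 1 (insert_zero n) 0%nat = 0%nat.
Proof. destruct n; reflexivity. Qed.

Lemma wsum_insert_zero x y zs n :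
  wsum (x :: y :: zs) (insert_zero n) = wsum (x :: zs) n.
Proof. destruct n; simpl; lra. Qed.

Lemma wsum_repeat_zero c k : wsum c (repeat 0%nat k) = 0.
Proof. revert k; induction c; intros [|k]; simpl; try rewrite IHc; lra. Qed.

(* The lattice-point form of [closed_walk_A] below: the second coordinate plays
   the role of [e3], the later ones those of [e4] and [e5]. *)
Definition lattice_pts_guarded (c : list R) (T : R) (n : list nat) : Prop :=
  lattice_pts c T n /\ (nth 1 n 0 = 0 -> skipn 2 n = repeat 0 (length n - 2))%nat.

Section SecondCoordinate.

Variables (x y : R) (zs : list R) (T : R).
Hypothesis Hpos : Forall (fun a => 0 < a) (x :: y :: zs).

Let second_pos (n : list nat) : Prop :=
  lattice_pts (x :: y :: zs) T n /\ (0 < nth 1 n 0)%nat.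

Lemma lattice_count_second_pos p :
  count_is second_pos p ->
  (p + lattice_count (x :: zs) T = lattice_count (x :: y :: zs) T)%nat.
Proof.
  intro Hp. inversion Hpos as [|? ? Hx Hyzs]; inversion Hyzs as [|? ? Hy Hzs]; subst.
  apply (count_is_unique (lattice_pts (x :: y :: zs) T)); [|now apply lattice_count_spec].
  apply (count_is_ext
    (fun n => second_pos n \/ exists m, lattice_pts (x :: zs) T m /\ n = insert_zero m)).
  - intro n; split.
    + intros [[Hn _] | [m [[Hl Hw] ->]]]; auto.
      destruct m as [|a m]; [discriminate|]. split; [simpl in *; lia|].
      rewrite wsum_insert_zero; exact Hw.
    + intros [Hl Hw]. destruct n as [|a [|[|b] r]]; try discriminate.
      * right. exists (a :: r). split; [split|]; auto.
        rewrite <- wsum_insert_zero with (y := y); exact Hw.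
      * left. repeat split; auto. simpl; lia.
  - apply count_is_union; auto.
    + apply count_is_image; [apply lattice_count_spec; auto|].
      intros [|a m] [|a' m'] [Hl _] [Hl' _] E; try discriminate.
      injection E; congruence.
    + intros n [_ Hn] [m [_ ->]]. rewrite nth_insert_zero in Hn; lia.
Qed.

Lemma lattice_count_guarded_split p :
  count_is second_pos p ->
  count_is (lattice_pts_guarded (x :: y :: zs) T) (p + lattice_count [x] T).
Proof.
  intro Hp. inversion Hpos as [|? ? Hx _]; subst.
  apply (count_is_ext (fun n => second_pos n \/
    exists m, lattice_pts [x] T m /\ n = insert_zero (m ++ repeat 0%nat (length zs)))).
  - intro n; split.
    + intros [[Hn Hb] | [[|a [|? ?]] [[Hl Hw] ->]]]; try discriminate.
      * split; auto. lia.
      * split; [split|].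
        -- simpl; rewrite repeat_length; reflexivity.
        -- rewrite wsum_insert_zero. simpl in *. rewrite wsum_repeat_zero. lra.
        -- intros _. simpl. rewrite repeat_length, Nat.sub_0_r; reflexivity.
    + intros [[Hl Hw] Hg]. destruct n as [|a [|[|b] r]]; try discriminate.
      * right. exists [a]. simpl in Hg. rewrite Nat.sub_0_r in Hg.
        specialize (Hg eq_refl).
        simpl in Hl. injection Hl as Hl. rewrite Hg in Hw |- *. rewrite <- Hl.
        split; [split|]; auto.
        simpl in Hw |- *. rewrite wsum_repeat_zero in Hw. lra.
      * left. repeat split; auto. simpl; lia.
  - apply count_is_union; auto.
    + apply count_is_image; [apply lattice_count_spec; auto|].
      intros [|a [|? ?]] [|a' [|? ?]] [Hl _] [Hl' _] E; try discriminate.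
      injection E; congruence.
    + intros n [_ Hn] [m [_ ->]]. rewrite nth_insert_zero in Hn; lia.
Qed.

Lemma lattice_count_guarded :
  exists g, count_is (lattice_pts_guarded (x :: y :: zs) T) g /\
    (g + lattice_count (x :: zs) T = lattice_count (x :: y :: zs) T + lattice_count [x] T)%nat.
Proof.
  destruct (count_is_subset _ second_pos _ (lattice_count_spec _ T Hpos) (fun n H => proj1 H))
    as [p Hp].
  exists (p + lattice_count [x] T)%nat. split.
  - now apply lattice_count_guarded_split.
  - rewrite <- (lattice_count_second_pos p Hp). lia.
Qed.

End SecondCoordinate.

Definition edge_eq_dec (e e' : edge) : {e = e'} + {e <> e'}.
Proof. decide equality. Defined.

Definition edge_vec (a1 a2 a3 a4 a5 : nat) (e : edge) : nat :=
  match e with e1 => a1 | e2 => a2 | e3 => a3 | e4 => a4 | e5 => a5 end.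

Definition bump (e : edge) (m : edge -> nat) (e' : edge) : nat :=
  if edge_eq_dec e' e then S (m e') else m e'.

Lemma bump_same e m : bump e m e = S (m e).
Proof. unfold bump; destruct edge_eq_dec; congruence. Qed.

Lemma bump_other e e' m : e' <> e -> bump e m e' = m e'.
Proof. unfold bump; destruct edge_eq_dec; congruence. Qed.

Definition on_path_from_A (X : vertex) (e : edge) : bool :=
  match X, e with
  | vL1, e1 | vL2, e2 | vB, e3 | vL4, e3 | vL4, e4 | vL5, e3 | vL5, e5 => true
  | _, _ => false
  end.

Lemma on_path_from_A_link e X Y e' : link e X Y ->
  on_path_from_A Y e' =
    if edge_eq_dec e' e then negb (on_path_from_A X e') else on_path_from_A X e'.
Proof.
  intros [H|H]; destruct e; injection H as <- <-; destruct e'; reflexivity.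
Qed.

(* [k e] counts the round trips over [e] of a closed walk from [A];
   [e4] and [e5] can only be reached through [e3]. *)
Definition closed_walk_A (k : edge -> nat) : Prop :=
  k e3 = 0%nat -> k e4 = 0%nat /\ k e5 = 0%nat.

Lemma Q2R_inject_Z z : Q2R (inject_Z z) = IZR z.
Proof. unfold Q2R, inject_Z; simpl; field. Qed.

Section HJunctionWalks.

Variable t : edge -> R.

Definition walk_time (m : edge -> nat) : R :=
  INR (m e1) * t e1 + INR (m e2) * t e2 + INR (m e3) * t e3
  + INR (m e4) * t e4 + INR (m e5) * t e5.

Lemma walk_time_ext m m' : (forall e, m e = m' e) -> walk_time m = walk_time m'.
Proof. intro H; unfold walk_time; rewrite !H; reflexivity. Qed.

Lemma walk_time_double k : walk_time (fun e => 2 * k e)%nat = 2 * walk_time k.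
Proof. unfold walk_time; rewrite !mult_INR; simpl; ring. Qed.

Lemma walk_time_bump e m : walk_time (bump e m) = walk_time m + t e.
Proof.
  unfold walk_time; destruct e;
    rewrite bump_same, !bump_other by discriminate; rewrite S_INR; ring.
Qed.

(* [m e] counts the traversals of [e] by a walk of duration [s] from [A] to [X].
   Such a walk crosses [e] an odd number of times iff [e] separates [A] from [X],
   and it can only use [e4], [e5] after crossing [e3]. *)
Definition walk_record (X : vertex) (s : R) (m : edge -> nat) : Prop :=
  s = walk_time m /\ (forall e, Nat.odd (m e) = on_path_from_A X e) /\
  (0 < m e4 \/ 0 < m e5 -> 0 < m e3)%nat.

Lemma walk_record_step e X Y s m : link e X Y ->
  walk_record X s m -> walk_record Y (s + t e) (bump e m).
Proof.
  intros Hl [Hs [Hpar Hinv]]. split; [|split].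
  - rewrite walk_time_bump, Hs; reflexivity.
  - intro e'. rewrite (on_path_from_A_link e X Y e' Hl), <- Hpar. unfold bump.
    destruct edge_eq_dec; [now rewrite Nat.odd_succ, <- Nat.negb_odd | reflexivity].
  - assert (He3 : on_path_from_A X e3 = true -> (0 < m e3)%nat).
    { rewrite <- Hpar. destruct (m e3); [discriminate | lia]. }
    destruct e; rewrite ?bump_same, !bump_other by discriminate; try lia;
      destruct Hl as [H|H]; injection H as <- <-; simpl in He3; lia.
Qed.

Lemma departs_walk_record X s : departs t vA X s -> exists m, walk_record X s m.
Proof.
  induction 1 as [|e X Y s Hl _ [m Hm]].
  - exists (fun _ => 0%nat). split; [unfold walk_time; simpl; ring | split; [|lia]].
    intros []; reflexivity.
  - exists (bump e m). now apply walk_record_step with X.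
Qed.

Lemma arrives_walk_record e Y s : arrives t vA e Y s ->
  exists m, walk_record Y s m /\ (0 < m e)%nat.
Proof.
  intros [X [Hl Hd]]. destruct (departs_walk_record X _ Hd) as [m Hm].
  exists (bump e m). split.
  - replace s with (s - t e + t e) by ring. now apply walk_record_step with X.
  - rewrite bump_same; lia.
Qed.

Lemma walk_record_A s m : walk_record vA s m ->
  exists k, closed_walk_A k /\ s = 2 * walk_time k /\ forall e, m e = (2 * k e)%nat.
Proof.
  intros [Hs [Hpar Hinv]].
  assert (Hm : forall e, m e = (2 * Nat.div2 (m e))%nat).
  { intro e. rewrite (Nat.div2_odd (m e)) at 1. rewrite Hpar. destruct e; simpl; lia. }
  exists (fun e => Nat.div2 (m e)). split; [|split; auto].
  - intro H3. rewrite (Hm e4), (Hm e5), (Hm e3), H3 in Hinv.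
    split; apply Nat.le_0_r, Nat.nlt_ge; intro H; lia.
  - rewrite Hs, (walk_time_ext _ _ Hm). apply walk_time_double.
Qed.

Lemma departs_bounce X0 e X Y s k : link e X Y ->
  departs t X0 X s -> departs t X0 X (s + 2 * INR k * t e).
Proof.
  intros Hl Hd. induction k as [|k IH].
  - replace (s + 2 * INR 0 * t e) with s by (simpl; ring). exact Hd.
  - replace (s + 2 * INR (S k) * t e) with (s + 2 * INR k * t e + t e + t e)
      by (rewrite S_INR; ring).
    apply dep_step with Y; [destruct Hl; [right|left]; auto|].
    now apply dep_step with X.
Qed.

Ltac by_link := unfold link; simpl; auto.

Lemma departs_B k : departs t vA vB (2 * walk_time k + t e3).
Proof.
  pose proof (departs_bounce vA e1 vA vL1 0 (k e1) ltac:(by_link) (dep_start _ _)) as H1.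
  pose proof (departs_bounce vA e2 vA vL2 _ (k e2) ltac:(by_link) H1) as H2.
  pose proof (dep_step t vA e3 vA vB _ ltac:(by_link) H2) as H3.
  pose proof (departs_bounce vA e4 vB vL4 _ (k e4) ltac:(by_link) H3) as H4.
  pose proof (departs_bounce vA e5 vB vL5 _ (k e5) ltac:(by_link) H4) as H5.
  pose proof (departs_bounce vA e3 vB vA _ (k e3) ltac:(by_link) H5) as H6.
  replace (2 * walk_time k + t e3) with
    (0 + 2 * INR (k e1) * t e1 + 2 * INR (k e2) * t e2 + t e3 + 2 * INR (k e4) * t e4
     + 2 * INR (k e5) * t e5 + 2 * INR (k e3) * t e3) by (unfold walk_time; ring).
  exact H6.
Qed.

Lemma departs_A k : closed_walk_A k -> departs t vA vA (2 * walk_time k).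
Proof.
  intro Hk. destruct (k e3) as [|p] eqn:Hk3.
  - destruct (Hk Hk3) as [Hk4 Hk5].
    pose proof (departs_bounce vA e1 vA vL1 0 (k e1) ltac:(by_link) (dep_start _ _)) as H1.
    pose proof (departs_bounce vA e2 vA vL2 _ (k e2) ltac:(by_link) H1) as H2.
    replace (2 * walk_time k) with (0 + 2 * INR (k e1) * t e1 + 2 * INR (k e2) * t e2)
      by (unfold walk_time; rewrite Hk3, Hk4, Hk5; simpl; ring).
    exact H2.
  - pose proof (dep_step t vA e3 vB vA _ ltac:(by_link)
      (departs_B (edge_vec (k e1) (k e2) p (k e4) (k e5)))) as H.
    replace (2 * walk_time k) with
      (2 * walk_time (edge_vec (k e1) (k e2) p (k e4) (k e5)) + t e3 + t e3)
      by (unfold walk_time; simpl; rewrite Hk3, S_INR; ring).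
    exact H.
Qed.

Lemma arrives_A k e : closed_walk_A k -> e = e1 \/ e = e2 \/ e = e3 -> (0 < k e)%nat ->
  arrives t vA e vA (2 * walk_time k).
Proof.
  intros Hk He Hpos. destruct (k e) as [|p] eqn:Hp; [lia|].
  destruct He as [-> | [-> | ->]].
  - exists vL1; split; [by_link|].
    replace (2 * walk_time k - t e1) with
      (2 * walk_time (edge_vec p (k e2) (k e3) (k e4) (k e5)) + t e1)
      by (unfold walk_time; simpl; rewrite Hp, S_INR; ring).
    apply dep_step with vA; [by_link|]. now apply departs_A.
  - exists vL2; split; [by_link|].
    replace (2 * walk_time k - t e2) with
      (2 * walk_time (edge_vec (k e1) p (k e3) (k e4) (k e5)) + t e2)
      by (unfold walk_time; simpl; rewrite Hp, S_INR; ring).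
    apply dep_step with vA; [by_link|]. now apply departs_A.
  - exists vB; split; [by_link|].
    replace (2 * walk_time k - t e3) with
      (2 * walk_time (edge_vec (k e1) (k e2) p (k e4) (k e5)) + t e3)
      by (unfold walk_time; simpl; rewrite Hp, S_INR; ring).
    apply departs_B.
Qed.

Hypothesis t_indep : Q_lin_indep5 (t e1) (t e2) (t e3) (t e4) (t e5).

Lemma walk_time_inj m m' :
  walk_time m = walk_time m' -> forall e, m e = m' e.
Proof.
  intro E.
  set (q e := inject_Z (Z.of_nat (m e) - Z.of_nat (m' e))).
  destruct (t_indep (q e1) (q e2) (q e3) (q e4) (q e5)) as [q1 [q2 [q3 [q4 q5]]]].
  - unfold q; rewrite !Q2R_inject_Z, !minus_IZR, <- !INR_IZR_INZ.
    unfold walk_time in E; lra.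
  - unfold q, Qeq in *; simpl in *. intros e; destruct e; lia.
Qed.

Lemma incident_A e : incident e vA <-> e = e1 \/ e = e2 \/ e = e3.
Proof.
  split.
  - intros [Y [H|H]]; destruct e; injection H; intros; subst; try discriminate; auto.
  - intros [-> | [-> | ->]]; eexists; by_link.
Qed.

(* Q-independence recovers [k] from the time, so a point arrives along [e] at
   time [2 * walk_time k] exactly when [0 < k e]. *)
Lemma birth_A_iff T s e : birth t vA vA T (s, e) <->
  exists k, closed_walk_A k /\ s = 2 * walk_time k /\ s <= T /\
    (e = e1 \/ e = e2 \/ e = e3) /\ k e = 0%nat.
Proof.
  unfold birth; simpl. rewrite incident_A. split.
  - intros [HT [Hd [He Harr]]].
    destruct (departs_walk_record vA s Hd) as [m Hm].
    destruct (walk_record_A s m Hm) as [k [Hk [Hs _]]].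
    exists k. do 4 (split; [assumption|]).
    destruct (k e) eqn:Hke; auto. exfalso; apply Harr.
    rewrite Hs; apply arrives_A; auto. rewrite Hke; lia.
  - intros [k [Hk [-> [HT [He Hke]]]]].
    split; [exact HT|]. split; [now apply departs_A|]. split; [exact He|].
    intro Harr. destruct (arrives_walk_record e vA _ Harr) as [m [Hm Hpos]].
    destruct (walk_record_A _ m Hm) as [k' [_ [Hs Hmk]]].
    assert (Hkk : k e = k' e) by (apply walk_time_inj; lra).
    rewrite Hmk, <- Hkk, Hke in Hpos. lia.
Qed.

Definition births_along (T : R) (e : edge) (p : R * edge) : Prop :=
  birth t vA vA T p /\ snd p = e.

Lemma N_H_A_split T a b c :
  count_is (births_along T e1) a -> count_is (births_along T e2) b ->
  count_is (births_along T e3) c -> N_H t vA vA T = (a + b + c)%nat.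
Proof.
  intros H1 H2 H3. apply ncard_spec.
  apply (count_is_ext (fun p =>
    (births_along T e1 p \/ births_along T e2 p) \/ births_along T e3 p)).
  - intros [s e]; unfold births_along; simpl. split.
    + intros [[[Hb _] | [Hb _]] | [Hb _]]; exact Hb.
    + intros Hb. pose proof Hb as [_ [_ [Hi _]]].
      destruct (proj1 (incident_A e) Hi) as [-> | [-> | ->]]; tauto.
  - apply count_is_union; [apply count_is_union; auto | auto | ].
    + intros p [_ E] [_ E']; congruence.
    + intros p [[_ E] | [_ E]] [_ E']; congruence.
Qed.

Lemma births_along_count T e c (P : list nat -> Prop) (coords : (edge -> nat) -> list nat) g :
  e = e1 \/ e = e2 \/ e = e3 ->
  (forall n, P n <->
     exists k, closed_walk_A k /\ k e = 0%nat /\ 2 * walk_time k <= T /\ n = coords k) ->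
  (forall k, closed_walk_A k -> k e = 0%nat -> wsum c (coords k) = 2 * walk_time k) ->
  (forall k k', (forall e', k e' = k' e') -> coords k = coords k') ->
  count_is P g -> count_is (births_along T e) g.
Proof.
  intros He HP Hw Hc Hg. apply count_is_bij with P (fun n => (wsum c n, e)); auto.
  - intros n n' Hn Hn' E. injection E as E.
    apply HP in Hn as [k [Hk [Hke [_ ->]]]]; apply HP in Hn' as [k' [Hk' [Hke' [_ ->]]]].
    apply Hc, walk_time_inj. rewrite Hw, Hw in E; auto. lra.
  - intros [s e']. unfold births_along; simpl. rewrite birth_A_iff. split.
    + intros [[k [Hk [Hs [HT [_ Hke]]]]] ->]. exists (coords k). split.
      * apply HP. exists k.
        split; [exact Hk|]. split; [exact Hke|]. split; [lra | reflexivity].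
      * rewrite Hw, Hs; auto.
    + intros [n [Hn E]]. injection E as -> ->. split; auto.
      apply HP in Hn as [k [Hk [Hke [HT ->]]]].
      exists k. rewrite Hw by assumption. split; [exact Hk|]. split; [reflexivity|].
      split; [exact HT|]. split; [exact He | exact Hke].
Qed.

Lemma births_along_e1 T g :
  count_is (lattice_pts_guarded [2 * t e2; 2 * t e3; 2 * t e4; 2 * t e5] T) g ->
  count_is (births_along T e1) g.
Proof.
  intro Hg.
  refine (births_along_count T e1 [2 * t e2; 2 * t e3; 2 * t e4; 2 * t e5] _
    (fun k => [k e2; k e3; k e4; k e5]) g _ _ _ _ Hg); [tauto | | | ].
  - intro n. split.
    + intros [[Hl Hw] Hguard]. destruct n as [|a [|b [|c [|d [|]]]]]; try discriminate.
      exists (edge_vec 0 a b c d). split; [|split; [reflexivity | split; [|reflexivity]]].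
      * intro Hb. simpl in Hb, Hguard |- *. injection (Hguard Hb); auto.
      * unfold walk_time; simpl in *; lra.
    + intros [k [Hk [Hk1 [HT ->]]]]. split; [split; [reflexivity|]|].
      * unfold walk_time in HT; rewrite Hk1 in HT; simpl in *; lra.
      * simpl; intro H3; destruct (Hk H3) as [-> ->]; reflexivity.
  - intros k _ Hk1; unfold walk_time; rewrite Hk1; simpl; ring.
  - intros k k' H; simpl; rewrite !H; reflexivity.
Qed.

Lemma births_along_e2 T g :
  count_is (lattice_pts_guarded [2 * t e1; 2 * t e3; 2 * t e4; 2 * t e5] T) g ->
  count_is (births_along T e2) g.
Proof.
  intro Hg.
  refine (births_along_count T e2 [2 * t e1; 2 * t e3; 2 * t e4; 2 * t e5] _
    (fun k => [k e1; k e3; k e4; k e5]) g _ _ _ _ Hg); [tauto | | | ].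
  - intro n. split.
    + intros [[Hl Hw] Hguard]. destruct n as [|a [|b [|c [|d [|]]]]]; try discriminate.
      exists (edge_vec a 0 b c d). split; [|split; [reflexivity | split; [|reflexivity]]].
      * intro Hb. simpl in Hb, Hguard |- *. injection (Hguard Hb); auto.
      * unfold walk_time; simpl in *; lra.
    + intros [k [Hk [Hk2 [HT ->]]]]. split; [split; [reflexivity|]|].
      * unfold walk_time in HT; rewrite Hk2 in HT; simpl in *; lra.
      * simpl; intro H3; destruct (Hk H3) as [-> ->]; reflexivity.
  - intros k _ Hk2; unfold walk_time; rewrite Hk2; simpl; ring.
  - intros k k' H; simpl; rewrite !H; reflexivity.
Qed.

Lemma births_along_e3 T g :
  count_is (lattice_pts [2 * t e1; 2 * t e2] T) g ->
  count_is (births_along T e3) g.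
Proof.
  intro Hg.
  refine (births_along_count T e3 [2 * t e1; 2 * t e2] _
    (fun k => [k e1; k e2]) g _ _ _ _ Hg); [tauto | | | ].
  - intro n. split.
    + intros [Hl Hw]. destruct n as [|a [|b [|]]]; try discriminate.
      exists (edge_vec a b 0 0 0). split; [|split; [reflexivity | split; [|reflexivity]]].
      * intros _; split; reflexivity.
      * unfold walk_time; simpl in *; lra.
    + intros [k [Hk [Hk3 [HT ->]]]]. destruct (Hk Hk3) as [Hk4 Hk5].
      split; [reflexivity|].
      unfold walk_time in HT; rewrite Hk3, Hk4, Hk5 in HT; simpl in *; lra.
  - intros k Hk Hk3; destruct (Hk Hk3) as [Hk4 Hk5].
    unfold walk_time; rewrite Hk3, Hk4, Hk5; simpl; ring.
  - intros k k' H; simpl; rewrite !H; reflexivity.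
Qed.

End HJunctionWalks.

Theorem mainTheorem3 (t1 t2 t3 t4 t5 : R) :
  0 < t1 -> 0 < t2 -> 0 < t3 -> 0 < t4 -> 0 < t5 ->
  Q_lin_indep5 t1 t2 t3 t4 t5 ->
  exists C : Z, forall T : R, 0 <= T ->
    Z.of_nat (N_H (tH t1 t2 t3 t4 t5) vA vA T%R) =
      (Z.of_nat (lattice_count [(2*t1)%R; (2*t3)%R; (2*t4)%R; (2*t5)%R] T%R)
     + Z.of_nat (lattice_count [(2*t2)%R; (2*t3)%R; (2*t4)%R; (2*t5)%R] T%R)
     - Z.of_nat (lattice_count [(2*t1)%R; (2*t4)%R; (2*t5)%R] T%R)
     - Z.of_nat (lattice_count [(2*t2)%R; (2*t4)%R; (2*t5)%R] T%R)
     + Z.of_nat (lattice_count [(2*t1)%R; (2*t2)%R] T%R)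
     + Z.of_nat (lattice_count [(2*t1)%R] T%R)
     + Z.of_nat (lattice_count [(2*t2)%R] T%R)
     + C)%Z.
Proof.
  intros Ht1 Ht2 Ht3 Ht4 Ht5 HQ. exists 0%Z. intros T _.
  set (t := tH t1 t2 t3 t4 t5).
  destruct (lattice_count_guarded (2 * t2) (2 * t3) [2 * t4; 2 * t5] T
    ltac:(repeat constructor; lra)) as [g1 [G1 E1]].
  destruct (lattice_count_guarded (2 * t1) (2 * t3) [2 * t4; 2 * t5] T
    ltac:(repeat constructor; lra)) as [g2 [G2 E2]].
  pose proof (lattice_count_spec [2 * t1; 2 * t2] T ltac:(repeat constructor; lra)) as G3.
  rewrite (N_H_A_split t T _ _ _
    (births_along_e1 t HQ T g1 G1) (births_along_e2 t HQ T g2 G2)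
    (births_along_e3 t HQ T _ G3)).
  lia.
Qed.
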